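(* Let $k>0$ and consider the system of ODEs, in cylindrical coordinates $(r,\theta,z)$ on $\mathbb{R}^3$ with momenta $p_R,p_S$, \[ \dot r = p_R,\quad \dot\theta = \frac{p_S}{r^2},\quad \dot z = \frac{p_S}{2},\quad \dot p_R = \frac{p_S^2}{r^3} - \frac{2kr^3}{(r^4+16z^2)^{3/2}},\quad \dot p_S = -\frac{8kr^2 z}{(r^4+16z^2)^{3/2}}, \] with first integrals $H = \frac12\big(p_R^2+\frac{p_S^2}{r^2}\big) - \frac{k}{\sqrt{r^4+16z^2}}$ and $F_3 = (2zp_R-rp_S)^2 + 4z^2\big(\frac{p_S^2}{r^2}+\frac{2k}{\sqrt{r^4+16z^2}}\big)$. Suppose $J := \sqrt{k^2+2HF_3} = 0$ and set $z_0 = \frac{k}{4|H|}$. Then the trajectories of non-stationary solutions are curves monotone in $z$ and in $\theta$ which, parametrized by $z$, have the form \[ r(z) = \Big(2\,\frac{z_0^2-z^2}{z_0}\Big)^{1/2},\qquad \theta(z) = \frac12\log\frac{z_0+z}{z_0-z} + \theta(0),\qquad |z|\le z_0. \] These solutions connect the stationary points $(r,z)=(0,\pm z_0)$ and take infinite time to approach them, i.e. $t(z)\to\pm\infty$ as $z\to\pm z_0$.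
   Context: The system describes nonholonomic motion on the Heisenberg group in the potential $-k/\sqrt{r^4+16z^2}$ in cylindrical coordinates $x=r\cos\theta$, $y=r\sin\theta$. $H$ and $F_3$ are constant along solutions, $F_3\ge0$, and $k^2+2HF_3\ge 0$. *)

From Stdlib Require Import Reals.
From Coquelicot Require Import Coquelicot.
Open Scope R_scope.

Definition Hfun (k r z pR pS : R) : R :=
  / 2 * (pR ^ 2 + pS ^ 2 / r ^ 2) - k / sqrt (r ^ 4 + 16 * z ^ 2).

Definition F3fun (k r z pR pS : R) : R :=
  (2 * z * pR - r * pS) ^ 2
  + 4 * z ^ 2 * (pS ^ 2 / r ^ 2 + 2 * k / sqrt (r ^ 4 + 16 * z ^ 2)).

(* (r, th, z, pR, pS) is a solution of the system on the open interval (a, b),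
   in the cylindrical chart r > 0.  Note (r^4+16z^2)^(3/2) = D * sqrt D. *)
Definition is_solution (k : R) (a b : Rbar) (r th z pR pS : R -> R) : Prop :=
  forall t : R, Rbar_lt a t -> Rbar_lt t b ->
    let D := r t ^ 4 + 16 * z t ^ 2 in
    0 < r t /\
    is_derive r t (pR t) /\
    is_derive th t (pS t / r t ^ 2) /\
    is_derive z t (pS t / 2) /\
    is_derive pR t (pS t ^ 2 / r t ^ 3 - 2 * k * r t ^ 3 / (D * sqrt D)) /\
    is_derive pS t (- (8 * k * r t ^ 2 * z t) / (D * sqrt D)).

Definition is_maximal_solution (k : R) (a b : Rbar) (r th z pR pS : R -> R) : Prop :=
  is_solution k a b r th z pR pS /\
  forall (a' b' : Rbar) (r' th' z' pR' pS' : R -> R),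
    is_solution k a' b' r' th' z' pR' pS' ->
    Rbar_le a' a -> Rbar_le b b' ->
    (forall t : R, Rbar_lt a t -> Rbar_lt t b ->
       r' t = r t /\ th' t = th t /\ z' t = z t /\ pR' t = pR t /\ pS' t = pS t) ->
    a' = a /\ b' = b.

(* With v = pS / r, the quantity k^2 + 2 H F3 is a sum of two squares.  Their vanishing gives
   H = -k / (sqrt (r^4 + 16 z^2) + r^2), so z0 = k / (4 |H|) = (sqrt (r^4 + 16 z^2) + r^2) / 4:
   the state lies on the ellipse z0 r^2 = 2 (z0^2 - z^2), and pR, pS are functions of z and of
   a constant q with q^2 = k.  As H and F3 are first integrals this holds at all times, and z
   solves z' = q/2 (z0^2 - z^2) / (z0^2 + z^2).  Its solutions are z = z0 tanh (m/2) with
   m - tanh (m/2) affine in t; they exist for all times and tend to z0 and -z0.  Lifted to the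
   curve they form a global solution extending the given one, so by maximality the given
   solution is defined on the whole line. *)

From Stdlib Require Import Reals Lra Psatz.
From Coquelicot Require Import Coquelicot.
Open Scope R_scope.

Lemma Rabs_lt_gaps (x c : R) : Rabs x < c -> 0 < c - x /\ 0 < c + x.
Proof. intros H; apply Rabs_def2 in H; lra. Qed.

Lemma Rabs_lt_sqr_gap (x c : R) : Rabs x < c -> 0 < c ^ 2 - x ^ 2.
Proof. intros H; destruct (Rabs_lt_gaps x c H). nra. Qed.

Lemma Rbar_lt_between (a b : Rbar) (s t x : R) :
  Rbar_lt a s -> Rbar_lt t b -> s <= x <= t -> Rbar_lt a x /\ Rbar_lt x b.
Proof.
  intros Ha Hb Hx. split.
  - apply Rbar_lt_le_trans with s; [exact Ha | simpl; lra].
  - apply Rbar_le_lt_trans with t; [simpl; lra | exact Hb].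
Qed.

Lemma Rbar_interval_locally (a b : Rbar) (x : R) :
  Rbar_lt a x -> Rbar_lt x b -> locally x (fun y => Rbar_lt a y /\ Rbar_lt y b).
Proof.
  intros Ha Hb. apply filter_and; [apply (open_Rbar_gt' x a Ha) | apply (open_Rbar_lt' x b Hb)].
Qed.

Lemma is_derive_value (f : R -> R) (x l l' : R) :
  is_derive f x l -> l = l' -> is_derive f x l'.
Proof. now intros H <-. Qed.

Lemma is_derive_chain (f g : R -> R) (x df dg l : R) :
  is_derive f (g x) df -> is_derive g x dg -> df * dg = l ->
  is_derive (fun t => f (g t)) x l.
Proof.
  intros Hf Hg <-. rewrite Rmult_comm. exact (is_derive_comp f g x df dg Hf Hg).
Qed.

Lemma is_derive_0_constant (f : R -> R) (a b : Rbar) (s t : R) :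
  (forall x : R, Rbar_lt a x -> Rbar_lt x b -> is_derive f x 0) ->
  Rbar_lt a s -> Rbar_lt s b -> Rbar_lt a t -> Rbar_lt t b -> f s = f t.
Proof.
  intros Hf Has Hsb Hat Htb.
  assert (H : forall u v : R, Rbar_lt a u -> Rbar_lt v b -> u < v -> f u = f v).
  { intros u v Hu Hv uv. apply eq_is_derive; [| exact uv].
    intros x Hx. destruct (Rbar_lt_between a b u v x Hu Hv Hx). now apply Hf. }
  destruct (Rtotal_order s t) as [st | [<- | ts]]; [auto | reflexivity | symmetry; auto].
Qed.

(* [f^2] is locally constant, so [2 f f' = 0], and [f] does not vanish *)
Lemma constant_of_sqr_constant (f : R -> R) (a b : Rbar) (c s t : R) : 0 < c ->
  (forall x : R, Rbar_lt a x -> Rbar_lt x b -> ex_derive f x /\ f x ^ 2 = c) ->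
  Rbar_lt a s -> Rbar_lt s b -> Rbar_lt a t -> Rbar_lt t b -> f s = f t.
Proof.
  intros c_pos Hf. apply is_derive_0_constant. intros x Ha Hb.
  destruct (Hf x Ha Hb) as [[df Hdf] fx].
  assert (sqr_derive_0 : is_derive (fun y => f y ^ 2) x 0).
  { apply (is_derive_ext_loc (fun _ => c)); [| apply (@is_derive_const R_AbsRing R_NormedModule)].
    apply (filter_imp _ _ (fun y Hy => eq_sym (proj2 (Hf y (proj1 Hy) (proj2 Hy))))).
    exact (Rbar_interval_locally a b x Ha Hb). }
  assert (sqr_derive : is_derive (fun y => f y ^ 2) x (2 * f x * df)).
  { apply (is_derive_chain (fun y => y ^ 2) f x (2 * f x) df); [| exact Hdf | ring].
    auto_derive; [easy | ring]. }
  assert (df_0 : 2 * f x * df = 0).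
  { rewrite <- (is_derive_unique _ _ _ sqr_derive). exact (is_derive_unique _ _ _ sqr_derive_0). }
  replace 0 with df; [exact Hdf |].
  assert (f x <> 0) by (intros fx0; rewrite fx0 in fx; simpl in fx; lra).
  apply (Rmult_eq_reg_l (2 * f x)); [lra | apply Rmult_integral_contrapositive; lra].
Qed.

Lemma derive_pos_increasing (f df : R -> R) :
  (forall x, is_derive f x (df x)) -> (forall x, 0 < df x) ->
  forall s t, s < t -> f s < f t.
Proof.
  intros Hf Hdf s t st.
  now apply (incr_function f m_infty p_infty df (fun x _ _ => Hf x) (fun x _ _ => Hdf x)).
Qed.

Lemma derive_neg_decreasing (f df : R -> R) :
  (forall x, is_derive f x (df x)) -> (forall x, df x < 0) ->
  forall s t, s < t -> f t < f s.
Proof.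
  intros Hf Hdf s t st. apply Ropp_lt_cancel.
  apply (derive_pos_increasing (fun x => - f x) (fun x => - df x));
    [| intros x; specialize (Hdf x); lra | exact st].
  intros x. exact (@is_derive_opp R_AbsRing R_NormedModule f x _ (Hf x)).
Qed.

Lemma is_lim_affine_pos (a b : R) : 0 < a ->
  is_lim (fun t => a * t + b) p_infty p_infty /\ is_lim (fun t => a * t + b) m_infty m_infty.
Proof.
  intros a_pos. split; apply is_lim_spec; intros M; exists ((M - b) / a); intros t Ht;
    apply (Rmult_lt_compat_l a) in Ht; try lra;
    replace (a * ((M - b) / a)) with (M - b) in Ht by (field; lra); lra.
Qed.

Lemma is_lim_affine_neg (a b : R) : a < 0 ->
  is_lim (fun t => a * t + b) p_infty m_infty /\ is_lim (fun t => a * t + b) m_infty p_infty.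
Proof.
  intros a_neg. split; apply is_lim_spec; intros M; exists ((M - b) / a); intros t Ht;
    apply (Rmult_lt_gt_compat_neg_l a) in Ht; try lra;
    replace (a * ((M - b) / a)) with (M - b) in Ht by (field; lra); lra.
Qed.

Lemma is_lim_comp_infinite (f g : R -> R) (x e l : Rbar) :
  e = p_infty \/ e = m_infty -> is_lim f e l -> is_lim g x e -> is_lim (fun t => f (g t)) x l.
Proof.
  intros e_inf Hf Hg. apply (is_lim_comp f g x l e Hf Hg).
  apply filter_forall. intros y. destruct e_inf as [-> | ->]; discriminate.
Qed.

Section InverseFunction.

Variables f df g : R -> R.
Hypotheses (f_derive : forall x, is_derive f x (df x)) (df_pos : forall x, 0 < df x)
  (f_g : forall y, f (g y) = y).

Lemma inverse_f_increasing (x y : R) : x < y -> f x < f y.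
Proof. exact (derive_pos_increasing f df f_derive df_pos x y). Qed.

Lemma inverse_g_f (x : R) : g (f x) = x.
Proof.
  destruct (Rtotal_order (g (f x)) x) as [H | [H | H]]; [| exact H |];
    apply inverse_f_increasing in H; rewrite f_g in H; lra.
Qed.

Lemma inverse_g_increasing (x y : R) : x < y -> g x < g y.
Proof.
  intros xy. destruct (Rlt_or_le (g x) (g y)) as [H | [H | H]]; [exact H | |];
    [apply inverse_f_increasing in H |]; rewrite <- (f_g x), <- (f_g y) in xy;
    [lra | rewrite H in xy; lra].
Qed.

Lemma inverse_derive (y : R) : is_derive g y (/ df (g y)).
Proof.
  assert (f_derivable : forall x, derivable_pt f x)
    by (intros x; exists (df x); apply is_derive_Reals, f_derive).
  assert (g_cont : continuity_pt g y).
  { apply (Ranalysis5.continuity_pt_recip_interv f g (g y - 1) (g y + 1)); try lra.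
    - intros; apply inverse_f_increasing; lra.
    - intros; apply f_g.
    - intros x H1 H2. rewrite <- (inverse_g_f (g y - 1)), <- (inverse_g_f (g y + 1)).
      split; [destruct H1 as [H1 | <-] | destruct H2 as [H2 | ->]];
        try (apply Rlt_le, inverse_g_increasing; assumption); lra.
    - intros; apply derivable_continuous_pt, f_derivable.
    - split; [rewrite <- (f_g y) at 2 | rewrite <- (f_g y) at 1];
        apply inverse_f_increasing; lra. }
  assert (g_bounds : g (y - 1) <= g y <= g (y + 1))
    by (split; apply Rlt_le, inverse_g_increasing; lra).
  pose proof (Ranalysis5.derivable_pt_lim_recip_interv f g (y - 1) (y + 1) y
    (fun x _ => f_derivable x) g_cont ltac:(lra) ltac:(lra) g_bounds) as H.
  rewrite (derive_pt_eq_0 f (g y) (df (g y)) _ (proj1 (is_derive_Reals _ _ _) (f_derive _))) in H.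
  apply is_derive_Reals. replace (/ df (g y)) with (1 / df (g y)) by (field; apply Rgt_not_eq, df_pos).
  apply H; [intros; apply f_g | apply Rgt_not_eq, df_pos].
Qed.

End InverseFunction.

(** * The first integrals H and F3 *)

Lemma sqrt_D_pos (r z : R) : 0 < r -> 0 < sqrt (r ^ 4 + 16 * z ^ 2).
Proof. intros; apply sqrt_lt_R0; pose proof (pow_lt r 4); nra. Qed.

Lemma sqrt_D_sqr (r z : R) : sqrt (r ^ 4 + 16 * z ^ 2) ^ 2 = r ^ 4 + 16 * z ^ 2.
Proof. apply pow2_sqrt; nra. Qed.

Section FirstIntegrals.

Variables (k : R) (a b : Rbar) (r th z pR pS : R -> R) (t : R).
Hypotheses (sol : is_solution k a b r th z pR pS) (Ha : Rbar_lt a t) (Hb : Rbar_lt t b).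

Let D := r t ^ 4 + 16 * z t ^ 2.

Local Ltac along_solution :=
  destruct (sol t Ha Hb) as [r_pos [dr [_ [dz [dpR dpS]]]]];
  pose proof (sqrt_D_pos (r t) (z t) r_pos) as s_pos;
  pose proof (sqrt_D_sqr (r t) (z t)) as s_sqr;
  assert (D_pos : 0 < D) by (pose proof (pow_lt (r t) 4 r_pos); unfold D; nra);
  fold D in s_pos, s_sqr, dpR, dpS;
  auto_derive;
  replace (r t * (r t * (r t * (r t * 1))) + 16 * (z t * (z t * 1))) with D by (unfold D; ring);
  [ repeat split; try (eexists; eassumption); try lra; apply Rmult_integral_contrapositive; lra
  | change (Derive (fun x => r x) t) with (Derive r t);
    change (Derive (fun x => z x) t) with (Derive z t);
    change (Derive (fun x => pR x) t) with (Derive pR t);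
    change (Derive (fun x => pS x) t) with (Derive pS t);
    rewrite (is_derive_unique _ _ _ dr), (is_derive_unique _ _ _ dz),
      (is_derive_unique _ _ _ dpR), (is_derive_unique _ _ _ dpS);
    set (s := sqrt D) in *; clearbody s;
    replace (s * s) with D by (rewrite <- s_sqr; ring); unfold D in *; field; repeat split; lra ].

Lemma Hfun_conserved : is_derive (fun s => Hfun k (r s) (z s) (pR s) (pS s)) t 0.
Proof. unfold Hfun. along_solution. Qed.

Lemma F3fun_conserved : is_derive (fun s => F3fun k (r s) (z s) (pR s) (pS s)) t 0.
Proof. unfold F3fun. along_solution. Qed.

End FirstIntegrals.

(** * The degenerate level set J = 0 *)

Definition curve_r (z0 x : R) : R := sqrt (2 * (z0 ^ 2 - x ^ 2) / z0).
Definition curve_th (z0 x : R) : R := / 2 * ln ((z0 + x) / (z0 - x)).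
Definition curve_pS (z0 q x : R) : R := q * (z0 ^ 2 - x ^ 2) / (z0 ^ 2 + x ^ 2).
Definition curve_pR (z0 q x : R) : R := - (x * curve_pS z0 q x) / (z0 * curve_r z0 x).

Section DegeneratePoint.

(* [u] stands for pR and [v] for pS / r, the angular velocity r th' *)
Variables (k r z u v : R).
Hypotheses (k_gt0 : 0 < k) (r_gt0 : 0 < r).

Lemma J_sum_of_squares :
  let s := sqrt (r ^ 4 + 16 * z ^ 2) in
  k ^ 2 + 2 * Hfun k r z u (r * v) * F3fun k r z u (r * v) =
  (k * r ^ 2 / s + v * (4 * z * u - r ^ 2 * v)) ^ 2
  + (2 * z * (u ^ 2 - v ^ 2) - r ^ 2 * u * v) ^ 2.
Proof.
  intros s. pose proof (sqrt_D_pos r z r_gt0) as s_gt0. pose proof (sqrt_D_sqr r z) as s_sqr.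
  unfold Hfun, F3fun; fold s in s_gt0, s_sqr |- *. clearbody s.
  match goal with |- _ = ?rhs =>
    transitivity (rhs + k ^ 2 * (s ^ 2 - (r ^ 4 + 16 * z ^ 2)) / s ^ 2) end.
  - field; split; lra.
  - rewrite s_sqr, Rminus_diag. field; split; nra.
Qed.

Hypothesis J_eq0 : k ^ 2 + 2 * Hfun k r z u (r * v) * F3fun k r z u (r * v) = 0.

Lemma degenerate_momenta :
  let s := sqrt (r ^ 4 + 16 * z ^ 2) in
  (s + r ^ 2) * u = - 4 * z * v /\ (s * v) ^ 2 = k * r ^ 2.
Proof.
  intros s. pose proof J_eq0 as J0; rewrite J_sum_of_squares in J0; fold s in J0.
  pose proof (sqrt_D_pos r z r_gt0) as s_gt0. pose proof (sqrt_D_sqr r z) as s_sqr.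
  fold s in s_gt0, s_sqr. clearbody s.
  assert (r2_gt0 : 0 < r ^ 2) by (apply pow_lt; lra).
  assert (ks_gt0 : 0 < k * r ^ 2 / s) by (apply Rdiv_lt_0_compat; nra).
  set (E1 := k * r ^ 2 / s + v * (4 * z * u - r ^ 2 * v)) in J0.
  set (E2 := 2 * z * (u ^ 2 - v ^ 2) - r ^ 2 * u * v) in J0.
  assert (E1_0 : E1 = 0) by nra.
  assert (E2_0 : E2 = 0) by nra.
  (* as s^2 = r^4 + 16 z^2, E2 splits into the two roots of a quadratic in u / v *)
  assert (E2_factor : ((s + r ^ 2) * u + 4 * z * v) * (4 * z * u - (s + r ^ 2) * v)
                      = 2 * (s + r ^ 2) * E2).
  { replace (((s + r ^ 2) * u + 4 * z * v) * (4 * z * u - (s + r ^ 2) * v))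
      with (2 * (s + r ^ 2) * E2 + u * v * (r ^ 4 + 16 * z ^ 2 - s ^ 2))
      by (unfold E2; ring).
    rewrite s_sqr; ring. }
  rewrite E2_0, Rmult_0_r in E2_factor.
  assert (root_eq : (s + r ^ 2) * u = - 4 * z * v).
  { destruct (Rmult_integral _ _ E2_factor) as [H | H]; [lra |].
    assert (E1_pos : E1 = k * r ^ 2 / s + s * v ^ 2).
    { unfold E1. replace (4 * z * u) with ((s + r ^ 2) * v) by lra. ring. }
    pose proof (pow2_ge_0 v). nra. }
  split; [exact root_eq |].
  assert (E1_scaled : k * r ^ 2 / s * (s + r ^ 2) = v ^ 2 * (r ^ 2 * s + s ^ 2)).
  { rewrite s_sqr.
    replace (k * r ^ 2 / s) with (v * (r ^ 2 * v - 4 * z * u)) by (unfold E1 in E1_0; lra).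
    replace (v * (r ^ 2 * v - 4 * z * u) * (s + r ^ 2))
      with (r ^ 2 * v ^ 2 * (s + r ^ 2) - 4 * z * v * ((s + r ^ 2) * u)) by ring.
    rewrite root_eq; ring. }
  apply (Rmult_eq_reg_r ((s + r ^ 2) / s)); [| apply Rgt_not_eq, Rdiv_lt_0_compat; lra].
  replace (k * r ^ 2 * ((s + r ^ 2) / s)) with (k * r ^ 2 / s * (s + r ^ 2)) by (field; lra).
  rewrite E1_scaled; field; lra.
Qed.

Lemma degenerate_energy :
  Hfun k r z u (r * v) = - k / (sqrt (r ^ 4 + 16 * z ^ 2) + r ^ 2).
Proof.
  destruct degenerate_momenta as [root_eq sv].
  pose proof (sqrt_D_pos r z r_gt0) as s_gt0. pose proof (sqrt_D_sqr r z) as s_sqr.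
  unfold Hfun. set (s := sqrt (r ^ 4 + 16 * z ^ 2)) in *. clearbody s.
  assert (r2_gt0 : 0 < r ^ 2) by (apply pow_lt; lra).
  assert (uv : (s + r ^ 2) * (u ^ 2 + v ^ 2) = 2 * s * v ^ 2).
  { apply (Rmult_eq_reg_l (s + r ^ 2)); [| lra].
    replace ((s + r ^ 2) * ((s + r ^ 2) * (u ^ 2 + v ^ 2)))
      with (((s + r ^ 2) * u) ^ 2 + (s + r ^ 2) ^ 2 * v ^ 2) by ring.
    rewrite root_eq.
    replace ((- 4 * z * v) ^ 2) with (16 * z ^ 2 * v ^ 2) by ring.
    replace (16 * z ^ 2) with (s ^ 2 - r ^ 4) by lra. ring. }
  replace ((r * v) ^ 2 / r ^ 2) with (v ^ 2) by (field; lra).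
  replace (u ^ 2 + v ^ 2) with (2 * s * v ^ 2 / (s + r ^ 2)) by (field_simplify_eq; lra).
  replace (v ^ 2) with (k * r ^ 2 / s ^ 2) by (rewrite <- sv; field; lra).
  field; lra.
Qed.

End DegeneratePoint.

Lemma degenerate_state_on_curve (k r z u w : R) : 0 < k -> 0 < r ->
  k ^ 2 + 2 * Hfun k r z u w * F3fun k r z u w = 0 ->
  let z0 := k / (4 * Rabs (Hfun k r z u w)) in
  Rabs z < z0 /\ r = curve_r z0 z /\ u = - (z * w) / (z0 * r) /\
  (w * (z0 ^ 2 + z ^ 2) / (z0 ^ 2 - z ^ 2)) ^ 2 = k.
Proof.
  intros k_gt0 r_gt0.
  replace w with (r * (w / r)) by (field; lra). set (v := w / r). clearbody v.
  intros J0 z0.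
  destruct (degenerate_momenta k r z u v k_gt0 r_gt0 J0) as [root_eq sv].
  pose proof (degenerate_energy k r z u v k_gt0 r_gt0 J0) as energy.
  pose proof (sqrt_D_pos r z r_gt0) as s_gt0. pose proof (sqrt_D_sqr r z) as s_sqr.
  set (s := sqrt (r ^ 4 + 16 * z ^ 2)) in *. clearbody s.
  assert (r2_gt0 : 0 < r ^ 2) by (apply pow_lt; lra).
  assert (z0_eq : z0 = (s + r ^ 2) / 4).
  { assert (0 < k / (s + r ^ 2)) by (apply Rdiv_lt_0_compat; lra).
    unfold z0. rewrite energy, Rabs_left; [field; lra |].
    replace (- k / (s + r ^ 2)) with (- (k / (s + r ^ 2))) by (field; lra). lra. }
  clearbody z0. subst z0.
  assert (diff_sqr : ((s + r ^ 2) / 4) ^ 2 - z ^ 2 = r ^ 2 * ((s + r ^ 2) / 4) / 2).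
  { replace (z ^ 2) with ((s ^ 2 - r ^ 4) / 16) by lra. field. }
  assert (sum_sqr : ((s + r ^ 2) / 4) ^ 2 + z ^ 2 = s * ((s + r ^ 2) / 4) / 2).
  { replace (z ^ 2) with ((s ^ 2 - r ^ 4) / 16) by lra. field. }
  repeat split.
  - apply Rabs_def1; nra.
  - unfold curve_r. rewrite diff_sqr.
    replace (2 * (r ^ 2 * ((s + r ^ 2) / 4) / 2) / ((s + r ^ 2) / 4)) with (r ^ 2) by (field; lra).
    rewrite sqrt_pow2; lra.
  - apply (Rmult_eq_reg_l (s + r ^ 2)); [| lra]. rewrite root_eq. field; lra.
  - rewrite diff_sqr, sum_sqr.
    replace k with ((s * v) ^ 2 / r ^ 2) by (rewrite sv; field; lra). field; lra.
Qed.

(** * The explicit curve and the solutions moving along it *)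

Section Curve.

Variables z0 q x : R.
Hypotheses (z0_gt0 : 0 < z0) (x_lt : Rabs x < z0).

Lemma curve_r_sqr : curve_r z0 x ^ 2 = 2 * (z0 ^ 2 - x ^ 2) / z0.
Proof.
  pose proof (Rabs_lt_sqr_gap x z0 x_lt). unfold curve_r.
  apply pow2_sqrt, Rlt_le, Rdiv_lt_0_compat; lra.
Qed.

Lemma curve_r_pos : 0 < curve_r z0 x.
Proof.
  pose proof (Rabs_lt_sqr_gap x z0 x_lt). apply sqrt_lt_R0, Rdiv_lt_0_compat; lra.
Qed.

Lemma curve_D : curve_r z0 x ^ 4 + 16 * x ^ 2 = (2 * (z0 ^ 2 + x ^ 2) / z0) ^ 2.
Proof.
  replace (curve_r z0 x ^ 4) with ((curve_r z0 x ^ 2) ^ 2) by ring.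
  rewrite curve_r_sqr. field; lra.
Qed.

Lemma curve_sqrt_D : sqrt (curve_r z0 x ^ 4 + 16 * x ^ 2) = 2 * (z0 ^ 2 + x ^ 2) / z0.
Proof.
  rewrite curve_D. apply sqrt_pow2.
  pose proof (pow2_ge_0 x). apply Rlt_le, Rdiv_lt_0_compat; nra.
Qed.

(* stereographic projection of the ellipse z0 r^2 = 2 (z0^2 - x^2) from its vertex (z0, 0);
   it turns identities in [x] and [curve_r z0 x] into rational identities in [l] *)
Lemma curve_rational_param : exists l, 0 < l /\
  x = z0 * (l ^ 2 * z0 - 2) / (l ^ 2 * z0 + 2) /\
  curve_r z0 x = 4 * l * z0 / (l ^ 2 * z0 + 2).
Proof.
  destruct (Rabs_lt_gaps x z0 x_lt) as [gap_m gap_p].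
  pose proof curve_r_pos as r_pos. pose proof curve_r_sqr as r_sqr.
  exists (curve_r z0 x / (z0 - x)).
  assert (l_sqr : (curve_r z0 x / (z0 - x)) ^ 2 * z0 = 2 * (z0 + x) / (z0 - x)).
  { unfold Rdiv at 1. rewrite Rpow_mult_distr, r_sqr. field; lra. }
  rewrite l_sqr. split; [apply Rdiv_lt_0_compat; lra |].
  split; field; lra.
Qed.

Local Ltac field_by_rational_param :=
  destruct curve_rational_param as [l [l_pos [x_eq r_eq]]];
  unfold curve_pS; rewrite r_eq, x_eq;
  assert (0 < l ^ 2 * z0 + 2) by (pose proof (pow2_ge_0 l); nra);
  field; repeat split; try lra;
  apply Rgt_not_eq, Rplus_lt_le_0_compat; [apply pow_lt; nra | apply pow2_ge_0].

Lemma curve_r_derive : is_derive (curve_r z0) x (- 2 * x / (z0 * curve_r z0 x)).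
Proof.
  pose proof (Rabs_lt_sqr_gap x z0 x_lt). pose proof curve_r_pos.
  apply is_derive_value with (- 4 * x / z0 / (2 * curve_r z0 x)); [| field; lra].
  apply is_derive_sqrt with (f := fun y => 2 * (z0 ^ 2 - y ^ 2) / z0).
  - auto_derive; [easy | field; lra].
  - apply Rdiv_lt_0_compat; lra.
Qed.

Lemma curve_th_derive : is_derive (curve_th z0) x (z0 / (z0 ^ 2 - x ^ 2)).
Proof.
  destruct (Rabs_lt_gaps x z0 x_lt). pose proof (Rabs_lt_sqr_gap x z0 x_lt).
  unfold curve_th. auto_derive.
  - repeat split; try lra. apply Rdiv_lt_0_compat; lra.
  - field; repeat split; lra.
Qed.

Lemma curve_pS_derive :
  is_derive (curve_pS z0 q) x (- 4 * q * z0 ^ 2 * x / (z0 ^ 2 + x ^ 2) ^ 2).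
Proof.
  assert (0 < z0 ^ 2 + x ^ 2) by (pose proof (pow2_ge_0 x); pose proof (pow_lt z0 2 z0_gt0); lra).
  unfold curve_pS. auto_derive; [lra | field; lra].
Qed.

Lemma curve_pR_derive :
  is_derive (curve_pR z0 q) x
    (- q * z0 * (z0 ^ 2 - 3 * x ^ 2) / (curve_r z0 x * (z0 ^ 2 + x ^ 2) ^ 2)).
Proof.
  assert (0 < z0 ^ 2 + x ^ 2) by (pose proof (pow2_ge_0 x); pose proof (pow_lt z0 2 z0_gt0); lra).
  pose proof curve_r_pos. pose proof curve_pS_derive as dpS. pose proof curve_r_derive as dr.
  unfold curve_pR. auto_derive.
  - repeat split; try (eexists; eassumption). apply Rmult_integral_contrapositive; lra.
  - change (Derive (fun y => curve_pS z0 q y) x) with (Derive (curve_pS z0 q) x).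
    change (Derive (fun y => curve_r z0 y) x) with (Derive (curve_r z0) x).
    rewrite (is_derive_unique _ _ _ dpS), (is_derive_unique _ _ _ dr).
    field_by_rational_param.
Qed.

Lemma curve_pR_ode :
  - q * z0 * (z0 ^ 2 - 3 * x ^ 2) / (curve_r z0 x * (z0 ^ 2 + x ^ 2) ^ 2)
    * (curve_pS z0 q x / 2) =
  curve_pS z0 q x ^ 2 / curve_r z0 x ^ 3 -
  2 * q ^ 2 * curve_r z0 x ^ 3 / ((2 * (z0 ^ 2 + x ^ 2) / z0) ^ 2 * (2 * (z0 ^ 2 + x ^ 2) / z0)).
Proof. field_by_rational_param. Qed.

End Curve.

Lemma curve_solution (k z0 q c : R) (a b : Rbar) (Z : R -> R) :
  0 < z0 -> q ^ 2 = k ->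
  (forall t : R, Rbar_lt a t -> Rbar_lt t b ->
     Rabs (Z t) < z0 /\ is_derive Z t (curve_pS z0 q (Z t) / 2)) ->
  is_solution k a b (fun t => curve_r z0 (Z t)) (fun t => curve_th z0 (Z t) + c) Z
    (fun t => curve_pR z0 q (Z t)) (fun t => curve_pS z0 q (Z t)).
Proof.
  intros z0_gt0 q_sqr HZ t Ha Hb. cbv zeta beta.
  destruct (HZ t Ha Hb) as [Zt dZ].
  pose proof (curve_r_pos z0 (Z t) z0_gt0 Zt) as r_pos.
  pose proof (curve_r_sqr z0 (Z t) z0_gt0 Zt) as r_sqr.
  pose proof (Rabs_lt_sqr_gap (Z t) z0 Zt).
  assert (0 < z0 ^ 2 + Z t ^ 2) by (pose proof (pow2_ge_0 (Z t)); lra).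
  rewrite (curve_sqrt_D z0 (Z t) z0_gt0 Zt), (curve_D z0 (Z t) z0_gt0 Zt).
  refine (conj r_pos (conj _ (conj _ (conj dZ (conj _ _))))).
  - apply (is_derive_chain _ _ _ _ _ _ (curve_r_derive z0 (Z t) z0_gt0 Zt) dZ).
    unfold curve_pR. field; lra.
  - apply (is_derive_value _ _ (plus (z0 / (z0 ^ 2 - Z t ^ 2) * (curve_pS z0 q (Z t) / 2)) zero)).
    + apply (is_derive_plus (fun t => curve_th z0 (Z t)) (fun _ => c)).
      * exact (is_derive_chain _ _ _ _ _ _ (curve_th_derive z0 (Z t) Zt) dZ eq_refl).
      * exact (@is_derive_const R_AbsRing R_NormedModule c t).
    + rewrite plus_zero_r, r_sqr. field; lra.
  - apply (is_derive_chain _ _ _ _ _ _ (curve_pR_derive z0 q (Z t) z0_gt0 Zt) dZ).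
    rewrite <- q_sqr. apply (curve_pR_ode z0 q (Z t) z0_gt0 Zt).
  - apply (is_derive_chain _ _ _ _ _ _ (curve_pS_derive z0 q (Z t) z0_gt0) dZ).
    rewrite r_sqr, <- q_sqr. unfold curve_pS. field; lra.
Qed.

(** * Motion along the curve *)

Definition tanh_half (m : R) : R := (exp m - 1) / (exp m + 1).

(* [(2 z0 / q) phi (ln ((z0 + z) / (z0 - z)))] is a primitive of [1 / z'] along the curve,
   i.e. the time as a function of [z] *)
Definition phi (m : R) : R := m - tanh_half m.

Lemma tanh_half_bound (m : R) : -1 < tanh_half m < 1.
Proof.
  pose proof (exp_pos m). unfold tanh_half.
  split; [apply Rmult_lt_reg_r with (exp m + 1) | apply Rmult_lt_reg_r with (exp m + 1)];
    try lra; field_simplify; lra.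
Qed.

Lemma tanh_half_derive (m : R) : is_derive tanh_half m ((1 - tanh_half m ^ 2) / 2).
Proof. pose proof (exp_pos m). unfold tanh_half. auto_derive; [lra | field; lra]. Qed.

Lemma is_lim_tanh_half_p : is_lim tanh_half p_infty 1.
Proof.
  apply is_lim_spec. intros [eps eps_pos]. exists (ln (2 / eps)). intros m Hm. simpl.
  apply exp_increasing in Hm. rewrite exp_ln in Hm by (apply Rdiv_lt_0_compat; lra).
  pose proof (exp_pos m).
  replace (tanh_half m - 1) with (- (2 / (exp m + 1))) by (unfold tanh_half; field; lra).
  rewrite Rabs_Ropp, Rabs_right by (apply Rle_ge, Rlt_le, Rdiv_lt_0_compat; lra).
  apply Rmult_lt_reg_r with (exp m + 1); [lra |].
  replace (2 / (exp m + 1) * (exp m + 1)) with 2 by (field; lra).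
  apply (Rmult_lt_compat_r eps) in Hm; [| lra].
  replace (2 / eps * eps) with 2 in Hm by (field; lra). nra.
Qed.

Lemma is_lim_tanh_half_m : is_lim tanh_half m_infty (-1).
Proof.
  apply is_lim_spec. intros [eps eps_pos]. exists (ln (eps / 2)). intros m Hm. simpl.
  apply exp_increasing in Hm. rewrite exp_ln in Hm by (apply Rdiv_lt_0_compat; lra).
  pose proof (exp_pos m).
  replace (tanh_half m - -1) with (2 * exp m / (exp m + 1)) by (unfold tanh_half; field; lra).
  rewrite Rabs_right by (apply Rle_ge, Rlt_le, Rdiv_lt_0_compat; lra).
  apply Rmult_lt_reg_r with (exp m + 1); [lra |].
  replace (2 * exp m / (exp m + 1) * (exp m + 1)) with (2 * exp m) by (field; lra).
  nra.
Qed.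

Lemma tanh_half_curve_th (z0 x : R) : Rabs x < z0 -> tanh_half (2 * curve_th z0 x) = x / z0.
Proof.
  intros x_lt. destruct (Rabs_lt_gaps x z0 x_lt).
  unfold tanh_half, curve_th.
  replace (2 * (/ 2 * ln ((z0 + x) / (z0 - x)))) with (ln ((z0 + x) / (z0 - x))) by field.
  rewrite exp_ln by (apply Rdiv_lt_0_compat; lra). field; lra.
Qed.

Lemma phi_derive (m : R) : is_derive phi m ((1 + tanh_half m ^ 2) / 2).
Proof. pose proof (exp_pos m). unfold phi, tanh_half. auto_derive; [lra | field; lra]. Qed.

Lemma phi_derive_pos (m : R) : 0 < (1 + tanh_half m ^ 2) / 2.
Proof. pose proof (pow2_ge_0 (tanh_half m)). lra. Qed.

Lemma phi_surjective (y : R) : { m : R | phi m = y }.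
Proof.
  assert (phi_cont : continuity phi).
  { intros m. apply continuity_pt_filterlim, (@ex_derive_continuous R_AbsRing R_NormedModule).
    eexists. apply phi_derive. }
  destruct (IVT_gen phi (y - 1) (y + 1) y phi_cont) as [m [_ Hm]]; [| now exists m].
  pose proof (tanh_half_bound (y - 1)). pose proof (tanh_half_bound (y + 1)).
  unfold phi. rewrite Rmin_left, Rmax_right; lra.
Qed.

Definition phi_inv (y : R) : R := proj1_sig (phi_surjective y).

Lemma phi_phi_inv (y : R) : phi (phi_inv y) = y.
Proof. exact (proj2_sig (phi_surjective y)). Qed.

Lemma phi_inv_phi (m : R) : phi_inv (phi m) = m.
Proof. exact (inverse_g_f phi _ phi_inv phi_derive phi_derive_pos phi_phi_inv m). Qed.

Lemma phi_inv_derive (y : R) :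
  is_derive phi_inv y (/ ((1 + tanh_half (phi_inv y) ^ 2) / 2)).
Proof. exact (inverse_derive phi _ phi_inv phi_derive phi_derive_pos phi_phi_inv y). Qed.

Lemma phi_inv_bound (y : R) : y - 1 < phi_inv y < y + 1.
Proof.
  pose proof (phi_phi_inv y) as H. pose proof (tanh_half_bound (phi_inv y)).
  unfold phi in H. lra.
Qed.

Lemma is_lim_phi_inv_p : is_lim phi_inv p_infty p_infty.
Proof.
  apply is_lim_spec. intros M. exists (M + 1). intros y Hy.
  pose proof (phi_inv_bound y). lra.
Qed.

Lemma is_lim_phi_inv_m : is_lim phi_inv m_infty m_infty.
Proof.
  apply is_lim_spec. intros M. exists (M - 1). intros y Hy.
  pose proof (phi_inv_bound y). lra.
Qed.

Definition curve_profile (z0 q s0 t : R) : R :=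
  z0 * tanh_half (phi_inv (q / (2 * z0) * t + s0)).

Lemma curve_profile_ode (z0 q s0 t : R) : 0 < z0 ->
  Rabs (curve_profile z0 q s0 t) < z0 /\
  is_derive (curve_profile z0 q s0) t (curve_pS z0 q (curve_profile z0 q s0 t) / 2).
Proof.
  intros z0_gt0. unfold curve_profile.
  set (m := phi_inv (q / (2 * z0) * t + s0)).
  pose proof (tanh_half_bound m). pose proof (pow2_ge_0 (tanh_half m)).
  split.
  - assert (Rabs (tanh_half m) < 1) by (apply Rabs_def1; lra).
    rewrite Rabs_mult, Rabs_right by lra. nra.
  - cbv beta. eapply (is_derive_chain (fun y => z0 * tanh_half (phi_inv y))).
    + eapply (is_derive_chain (fun y => z0 * tanh_half y)); [| apply phi_inv_derive | reflexivity].
      eapply (is_derive_chain (fun y => z0 * y)); [| apply tanh_half_derive | reflexivity].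
      auto_derive; [easy | reflexivity].
    + auto_derive; [easy | reflexivity].
    + fold m. unfold curve_pS. field. nra.
Qed.

Lemma is_lim_curve_profile_p (z0 q s0 : R) (x : Rbar) :
  is_lim (fun t => q / (2 * z0) * t + s0) x p_infty -> is_lim (curve_profile z0 q s0) x z0.
Proof.
  intros H. rewrite <- (Rmult_1_r z0) at 2. apply (is_lim_scal_l _ z0 x 1).
  apply (is_lim_comp_infinite _ _ _ p_infty); [now left | exact is_lim_tanh_half_p |].
  exact (is_lim_comp_infinite _ _ _ p_infty _ (or_introl eq_refl) is_lim_phi_inv_p H).
Qed.

Lemma is_lim_curve_profile_m (z0 q s0 : R) (x : Rbar) :
  is_lim (fun t => q / (2 * z0) * t + s0) x m_infty -> is_lim (curve_profile z0 q s0) x (- z0).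
Proof.
  intros H. replace (- z0) with (z0 * -1) by ring. apply (is_lim_scal_l _ z0 x (-1)).
  apply (is_lim_comp_infinite _ _ _ m_infty); [now right | exact is_lim_tanh_half_m |].
  exact (is_lim_comp_infinite _ _ _ m_infty _ (or_intror eq_refl) is_lim_phi_inv_m H).
Qed.

Lemma curve_clock_derive (z0 q : R) (Z : R -> R) (t : R) : 0 < z0 -> Rabs (Z t) < z0 ->
  is_derive Z t (curve_pS z0 q (Z t) / 2) ->
  is_derive (fun s => phi (2 * curve_th z0 (Z s))) t (q / (2 * z0)).
Proof.
  intros z0_gt0 Zt dZ.
  pose proof (Rabs_lt_sqr_gap (Z t) z0 Zt). pose proof (pow2_ge_0 (Z t)).
  eapply (is_derive_chain (fun y => phi (2 * curve_th z0 y))); [| exact dZ |].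
  - eapply (is_derive_chain phi (fun y => 2 * curve_th z0 y)); [apply phi_derive | | reflexivity].
    eapply (is_derive_chain (fun y => 2 * y)); [| apply (curve_th_derive z0 _ Zt) | reflexivity].
    auto_derive; [easy | reflexivity].
  - rewrite tanh_half_curve_th by exact Zt. unfold curve_pS. field; repeat split; lra.
Qed.

Lemma curve_ode_eq_profile (z0 q : R) (a b : Rbar) (Z : R -> R) (t0 : R) : 0 < z0 ->
  (forall t : R, Rbar_lt a t -> Rbar_lt t b ->
     Rabs (Z t) < z0 /\ is_derive Z t (curve_pS z0 q (Z t) / 2)) ->
  Rbar_lt a t0 -> Rbar_lt t0 b ->
  exists s0, forall t : R, Rbar_lt a t -> Rbar_lt t b -> Z t = curve_profile z0 q s0 t.
Proof.
  intros z0_gt0 HZ Ha0 Hb0.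
  set (clock := fun s => phi (2 * curve_th z0 (Z s)) - q / (2 * z0) * s).
  exists (clock t0). intros t Ha Hb.
  assert (clock_const : clock t = clock t0).
  { apply (is_derive_0_constant clock a b); try assumption.
    intros x Hxa Hxb. destruct (HZ x Hxa Hxb) as [Zx dZ].
    apply (is_derive_value _ _ (q / (2 * z0) - q / (2 * z0) * 1)); [| ring].
    apply (is_derive_minus (fun s => phi (2 * curve_th z0 (Z s))) (fun s => q / (2 * z0) * s)).
    - exact (curve_clock_derive z0 q Z x z0_gt0 Zx dZ).
    - auto_derive; [easy | ring]. }
  unfold curve_profile.
  replace (q / (2 * z0) * t + clock t0) with (phi (2 * curve_th z0 (Z t)))
    by (rewrite <- clock_const; unfold clock; ring).
  rewrite phi_inv_phi, tanh_half_curve_th by apply (HZ t Ha Hb). field; lra.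
Qed.

Section DegenerateSolution.

Variables (k : R) (a b : Rbar) (r th z pR pS : R -> R) (t0 : R).
Hypotheses (k_gt0 : 0 < k) (sol : is_solution k a b r th z pR pS)
  (Ha0 : Rbar_lt a t0) (Hb0 : Rbar_lt t0 b)
  (J_eq0 : k ^ 2 + 2 * Hfun k (r t0) (z t0) (pR t0) (pS t0)
                     * F3fun k (r t0) (z t0) (pR t0) (pS t0) = 0).

Let z0 := k / (4 * Rabs (Hfun k (r t0) (z t0) (pR t0) (pS t0))).

Lemma solution_on_curve (t : R) : Rbar_lt a t -> Rbar_lt t b ->
  Rabs (z t) < z0 /\ r t = curve_r z0 (z t) /\ pR t = - (z t * pS t) / (z0 * r t) /\
  (pS t * (z0 ^ 2 + z t ^ 2) / (z0 ^ 2 - z t ^ 2)) ^ 2 = k.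
Proof.
  intros Ha Hb.
  assert (H_t : Hfun k (r t) (z t) (pR t) (pS t) = Hfun k (r t0) (z t0) (pR t0) (pS t0)).
  { apply (is_derive_0_constant (fun s => Hfun k (r s) (z s) (pR s) (pS s)) a b); try assumption.
    intros; apply (Hfun_conserved k a b r th z pR pS); assumption. }
  assert (F3_t : F3fun k (r t) (z t) (pR t) (pS t) = F3fun k (r t0) (z t0) (pR t0) (pS t0)).
  { apply (is_derive_0_constant (fun s => F3fun k (r s) (z s) (pR s) (pS s)) a b); try assumption.
    intros; apply (F3fun_conserved k a b r th z pR pS); assumption. }
  pose proof (degenerate_state_on_curve k (r t) (z t) (pR t) (pS t) k_gt0 (proj1 (sol t Ha Hb)))
    as H.
  rewrite H_t, F3_t in H. exact (H J_eq0).
Qed.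

Lemma z0_pos : 0 < z0.
Proof.
  destruct (solution_on_curve t0 Ha0 Hb0) as [z_lt _].
  pose proof (Rabs_pos (z t0)). lra.
Qed.

Lemma solution_charge :
  exists q, q ^ 2 = k /\ forall t : R, Rbar_lt a t -> Rbar_lt t b -> pS t = curve_pS z0 q (z t).
Proof.
  set (Q := fun t => pS t * (z0 ^ 2 + z t ^ 2) / (z0 ^ 2 - z t ^ 2)).
  assert (HQ : forall t : R, Rbar_lt a t -> Rbar_lt t b -> ex_derive Q t /\ Q t ^ 2 = k).
  { intros t Ha Hb. destruct (solution_on_curve t Ha Hb) as [z_lt [_ [_ Q_sqr]]].
    destruct (sol t Ha Hb) as [_ [_ [_ [dz [_ dpS]]]]].
    pose proof (Rabs_lt_sqr_gap (z t) z0 z_lt).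
    split; [| exact Q_sqr].
    unfold Q. auto_derive. repeat split; try (eexists; eassumption). lra. }
  exists (Q t0). split; [apply HQ; assumption |].
  intros t Ha Hb.
  destruct (solution_on_curve t Ha Hb) as [z_lt _].
  pose proof (Rabs_lt_sqr_gap (z t) z0 z_lt). pose proof (pow2_ge_0 (z t)).
  rewrite <- (constant_of_sqr_constant Q a b k t t0 k_gt0 HQ Ha Hb Ha0 Hb0).
  unfold Q, curve_pS. field. lra.
Qed.

Lemma solution_is_curve : exists q c, q ^ 2 = k /\
  forall t : R, Rbar_lt a t -> Rbar_lt t b ->
    (Rabs (z t) < z0 /\ is_derive z t (curve_pS z0 q (z t) / 2)) /\
    r t = curve_r z0 (z t) /\ th t = curve_th z0 (z t) + c /\
    pR t = curve_pR z0 q (z t) /\ pS t = curve_pS z0 q (z t).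
Proof.
  destruct solution_charge as [q [q_sqr pS_eq]].
  exists q, (th t0 - curve_th z0 (z t0)). split; [exact q_sqr |].
  assert (on_curve : forall s : R, Rbar_lt a s -> Rbar_lt s b ->
    Rabs (z s) < z0 /\ is_derive z s (curve_pS z0 q (z s) / 2) /\ r s = curve_r z0 (z s)).
  { intros s Ha Hb. destruct (solution_on_curve s Ha Hb) as [z_lt [r_eq _]].
    destruct (sol s Ha Hb) as [_ [_ [_ [dz _]]]]. rewrite <- pS_eq by assumption. auto. }
  assert (th_shift : forall t : R, Rbar_lt a t -> Rbar_lt t b ->
    th t - curve_th z0 (z t) = th t0 - curve_th z0 (z t0)).
  { intros t Ha Hb.
    apply (is_derive_0_constant (fun s => th s - curve_th z0 (z s)) a b); try assumption.
    intros x Hxa Hxb. destruct (on_curve x Hxa Hxb) as [z_lt [dz r_eq]].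
    destruct (sol x Hxa Hxb) as [r_pos [_ [dth _]]].
    apply (is_derive_value _ _ (pS x / r x ^ 2 - z0 / (z0 ^ 2 - z x ^ 2) * (curve_pS z0 q (z x) / 2))).
    - apply (is_derive_minus th (fun s => curve_th z0 (z s))); [exact dth |].
      exact (is_derive_chain _ _ _ _ _ _ (curve_th_derive z0 (z x) z_lt) dz eq_refl).
    - pose proof (Rabs_lt_sqr_gap (z x) z0 z_lt). pose proof z0_pos.
      rewrite r_eq, (curve_r_sqr z0 (z x) z0_pos z_lt), (pS_eq x Hxa Hxb).
      field; repeat split; lra. }
  intros t Ha Hb.
  destruct (on_curve t Ha Hb) as [z_lt [dz r_eq]].
  destruct (solution_on_curve t Ha Hb) as [_ [_ [pR_eq _]]].
  split; [auto |]. split; [exact r_eq |]. split; [| split].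
  - specialize (th_shift t Ha Hb). lra.
  - rewrite pR_eq, r_eq, pS_eq by assumption. reflexivity.
  - auto.
Qed.

End DegenerateSolution.

Lemma curve_pS_sign (z0 q x : R) : Rabs x < z0 -> q <> 0 -> 0 < q * curve_pS z0 q x.
Proof.
  intros x_lt q_nz. pose proof (Rabs_lt_sqr_gap x z0 x_lt). pose proof (pow2_ge_0 x).
  pose proof (Rsqr_pos_lt q q_nz). unfold Rsqr in *.
  unfold curve_pS. replace (q * (q * (z0 ^ 2 - x ^ 2) / (z0 ^ 2 + x ^ 2)))
    with (q * q * ((z0 ^ 2 - x ^ 2) / (z0 ^ 2 + x ^ 2))) by (field; lra).
  apply Rmult_lt_0_compat; [lra | apply Rdiv_lt_0_compat; lra].
Qed.

Lemma curve_motion_monotone (z0 q s0 : R) (r th z pS : R -> R) : 0 < z0 -> q <> 0 ->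
  (forall t : R, 0 < r t /\ is_derive th t (pS t / r t ^ 2) /\ is_derive z t (pS t / 2) /\
     pS t = curve_pS z0 q (z t) /\ Rabs (z t) < z0 /\ z t = curve_profile z0 q s0 t) ->
  ((forall s t : R, s < t -> th s < th t) \/ (forall s t : R, s < t -> th t < th s)) /\
  (((forall s t : R, s < t -> z s < z t) /\ is_lim z p_infty z0 /\ is_lim z m_infty (- z0)) \/
   ((forall s t : R, s < t -> z t < z s) /\ is_lim z p_infty (- z0) /\ is_lim z m_infty z0)).
Proof.
  intros z0_gt0 q_nz H.
  assert (pS_sign : forall t, 0 < q * pS t /\ 0 < r t ^ 2).
  { intros t. destruct (H t) as [r_pos [_ [_ [-> [z_lt _]]]]].
    split; [exact (curve_pS_sign z0 q (z t) z_lt q_nz) | apply pow_lt, r_pos]. }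
  assert (z_eq : forall t, curve_profile z0 q s0 t = z t) by (intros t; symmetry; apply H).
  destruct (Rdichotomy _ _ q_nz) as [q_neg | q_pos].
  - assert (a_neg : q / (2 * z0) < 0) by (apply Rdiv_neg_pos; lra).
    destruct (is_lim_affine_neg _ s0 a_neg) as [lim_p lim_m].
    split; right; [| split; [| split]].
    + apply (derive_neg_decreasing th (fun t => pS t / r t ^ 2)); [apply H |].
      intros t. destruct (pS_sign t). apply Rdiv_neg_pos; nra.
    + apply (derive_neg_decreasing z (fun t => pS t / 2)); [apply H |].
      intros t. destruct (pS_sign t). nra.
    + exact (is_lim_ext _ _ _ _ z_eq (is_lim_curve_profile_m z0 q s0 p_infty lim_p)).
    + exact (is_lim_ext _ _ _ _ z_eq (is_lim_curve_profile_p z0 q s0 m_infty lim_m)).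
  - assert (a_pos : 0 < q / (2 * z0)) by (apply Rdiv_lt_0_compat; lra).
    destruct (is_lim_affine_pos _ s0 a_pos) as [lim_p lim_m].
    split; left; [| split; [| split]].
    + apply (derive_pos_increasing th (fun t => pS t / r t ^ 2)); [apply H |].
      intros t. destruct (pS_sign t). apply Rdiv_lt_0_compat; nra.
    + apply (derive_pos_increasing z (fun t => pS t / 2)); [apply H |].
      intros t. destruct (pS_sign t). nra.
    + exact (is_lim_ext _ _ _ _ z_eq (is_lim_curve_profile_p z0 q s0 p_infty lim_p)).
    + exact (is_lim_ext _ _ _ _ z_eq (is_lim_curve_profile_m z0 q s0 m_infty lim_m)).
Qed.

Theorem theorem6 (k : R) (a b : Rbar) (r th z pR pS : R -> R) (t0 : R) :
  0 < k ->
  is_maximal_solution k a b r th z pR pS ->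
  Rbar_lt a t0 -> Rbar_lt t0 b ->
  k ^ 2 + 2 * Hfun k (r t0) (z t0) (pR t0) (pS t0)
            * F3fun k (r t0) (z t0) (pR t0) (pS t0) = 0 ->
  let z0 := k / (4 * Rabs (Hfun k (r t0) (z t0) (pR t0) (pS t0))) in
  (* the solution exists for all times: infinite time to reach the endpoints *)
  a = m_infty /\ b = p_infty /\
  (* the trajectory lies on the explicit curve *)
  (forall t : R,
     Rabs (z t) < z0 /\
     r t = sqrt (2 * (z0 ^ 2 - z t ^ 2) / z0)) /\
  (exists c : R, forall t : R,
     th t = / 2 * ln ((z0 + z t) / (z0 - z t)) + c) /\
  (* monotone in theta *)
  ((forall s t : R, s < t -> th s < th t) \/
   (forall s t : R, s < t -> th t < th s)) /\
  (* monotone in z, connecting (0, -z0) and (0, z0) as t -> -oo / +oo *)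
  (((forall s t : R, s < t -> z s < z t) /\
    is_lim z p_infty z0 /\ is_lim z m_infty (- z0)) \/
   ((forall s t : R, s < t -> z t < z s) /\
    is_lim z p_infty (- z0) /\ is_lim z m_infty z0)).
Proof.
  intros k_gt0 [sol maximal] Ha0 Hb0 J_eq0 z0.
  pose proof (z0_pos k a b r th z pR pS t0 k_gt0 sol Ha0 Hb0 J_eq0) as z0_gt0.
  destruct (solution_is_curve k a b r th z pR pS t0 k_gt0 sol Ha0 Hb0 J_eq0)
    as [q [c [q_sqr on_curve]]].
  fold z0 in z0_gt0, on_curve.
  destruct (curve_ode_eq_profile z0 q a b z t0 z0_gt0
              (fun t Ha Hb => proj1 (on_curve t Ha Hb)) Ha0 Hb0) as [s0 z_profile].
  destruct (maximal m_infty p_infty _ _ _ _ _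
              (curve_solution k z0 q c m_infty p_infty _ z0_gt0 q_sqr
                 (fun t _ _ => curve_profile_ode z0 q s0 t z0_gt0)))
    as [<- <-]; [now destruct a | now destruct b | |].
  { intros t Ha Hb. rewrite <- (z_profile t Ha Hb).
    destruct (on_curve t Ha Hb) as [_ [-> [-> [-> ->]]]]. auto. }
  assert (q_nz : q <> 0) by (intros ->; simpl in q_sqr; lra).
  split; [reflexivity |]. split; [reflexivity |]. split; [| split].
  - intros t. destruct (on_curve t I I) as [[z_lt _] [r_eq _]]. exact (conj z_lt r_eq).
  - exists c. intros t. apply (on_curve t I I).
  - apply (curve_motion_monotone z0 q s0 r th z pS z0_gt0 q_nz). intros t.
    destruct (sol t I I) as [r_pos [_ [dth [dz _]]]].
    destruct (on_curve t I I) as [[z_lt _] [_ [_ [_ pS_eq]]]].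
    exact (conj r_pos (conj dth (conj dz (conj pS_eq (conj z_lt (z_profile t I I)))))).
Qed.
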